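(* Let $V$ be a vector configuration of rank $r$. For every $s$ with $1\le s\le r-1$ there is a subconfiguration $W\subseteq V$ of rank $s$ such that $\mathrm{DD}(V)=\mathrm{DD}(W)+\mathrm{DD}(V/W)$, $\mathrm{DD}(W)\ge\min\{\mathrm{DD}(V),s\}$, and $W=\operatorname{lin}(W)\cap V$.
   Context: A vector configuration is a finite family (repetitions allowed) of vectors in a real vector space $E$; a subconfiguration is a subfamily, $\operatorname{rank}(W)=\dim\operatorname{lin}(W)$, cardinalities count multiplicities; $W=\operatorname{lin}(W)\cap V$ means the elements of $V$ lying in $\operatorname{lin}(W)$ are exactly those of $W$. The quotient $V/W$ is the configuration in $E/\operatorname{lin}(W)$ of the images of the elements of $V\setminus W$. Covector discrepancy: $\mathrm{DD}(X)=\max_f\big|\,|\{x\in X: f(x)>0\}|-|\{x\in X:f(x)<0\}|\,\big|$ over all linear functionals $f$ on the ambient space. *)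

From HB Require Import structures.
From mathcomp Require Import all_boot all_order all_algebra.
From mathcomp Require Import boolp reals.
Set Implicit Arguments. Unset Strict Implicit. Unset Printing Implicit Defensive.
Import Order.TTheory GRing.Theory Num.Theory.
Local Open Scope ring_scope.

(* A vector configuration in E = R^n (row vectors) is a family v : I -> 'rV[R]_n
   indexed by a finite type I (repetitions allowed).  A subconfiguration is a
   subset W : {set I} of the indices. *)

Section VC.
Variables (R : realType) (n : nat) (I : finType) (v : I -> 'rV[R]_n).

Definition fapp (f : 'cV[R]_n) (x : 'rV[R]_n) : R := (x *m f) 0 0.

Definition linW (W : {set I}) : 'M[R]_n := (\sum_(i in W) <<v i>>)%MS.

Definition crank (W : {set I}) : nat := \rank (linW W).

Definition imbalance (W : {set I}) (f : 'cV[R]_n) : nat :=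
  let pos := #|[set i in W | (0 < fapp f (v i))%R]| in
  let neg := #|[set i in W | (fapp f (v i) < 0)%R]| in
  `|pos - neg|%N.

(* DD(W): max over all linear functionals on E (the maximum exists since the
   values lie in [0, #|I|]). *)
Definition DD (W : {set I}) : nat :=
  \max_(k < #|I|.+1 | `[< exists f : 'cV[R]_n, imbalance W f = k >]) k.

(* DD(V/W): linear functionals on E / lin(W) are exactly the functionals on E
   vanishing on lin(W) (equivalently on the generators v i, i in W); the
   quotient configuration consists of the images of the elements of V \ W. *)
Definition DDquot (W : {set I}) : nat :=
  \max_(k < #|I|.+1 | `[< exists f : 'cV[R]_n,
        (forall i, i \in W -> fapp f (v i) = 0) /\ imbalance (~: W) f = k >]) k.

Definition lin_closed (W : {set I}) : Prop :=
  forall i, (v i <= linW W)%MS -> i \in W.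

End VC.

From HB Require Import structures.
From mathcomp Require Import all_boot all_order all_algebra.
From mathcomp Require Import boolp reals.
From mathcomp Require Import ring lra zify.
Set Implicit Arguments. Unset Strict Implicit. Unset Printing Implicit Defensive.
Import Order.TTheory GRing.Theory Num.Theory.
Local Open Scope ring_scope.

(* Write DD(B/A) for the discrepancy of the images of B \ A in E / lin A, that is
   the maximal signed count on B \ A of a functional vanishing on A.  For a flat
   C between A and B this is superadditive: perturbing an optimal functional for
   B/C that is nonzero off C by a small optimal one for C/A adds the two counts.
   The theorem then follows by induction on the rank, once every pair of flats
   A < B of corank at least two admits a flat C strictly between them with
   DD(B/A) = DD(C/A) + DD(B/C) and DD(C/A) >= min(DD(B/A), 1).  This C is the
   zero set of a functional phi met when sliding a generic optimal functional f
   towards a suboptimal g that vanishes on A and on some point but not on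
   another: at the first zero, phi agrees in sign with f off its zero set, and
   either f counts at least 1 on that zero set, or flipping the signs of f
   there gives another optimal functional that disagrees less with g. *)

Section SignPatterns.
Variables (R : realFieldType) (I : finType).
Implicit Types (a b : I -> R) (X : {set I}).

Lemma sgz_pmulr (a c : R) : 0 < a * c -> sgz c = sgz a.
Proof. by move=> /gtr0_sgz/eqP; rewrite sgzM mulz_sg_eq1 => /andP[_ /eqP]. Qed.

Lemma mulrr_gt0 (a : R) : a != 0 -> 0 < a * a.
Proof. by move=> a_nz; rewrite -expr2 exprn_even_gt0. Qed.

Lemma sgz_addr_small (a c : R) : `|c| < `|a| -> sgz (a + c) = sgz a.
Proof.
move=> lt_ca; apply/esym/sgz_pmulr.
have [a_lt0|a_gt0|a0] := ltrgtP a 0.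
- by move: lt_ca; rewrite (ltr0_norm a_lt0) ltr_norml => /andP[]; nra.
- by move: lt_ca; rewrite (gtr0_norm a_gt0) ltr_norml => /andP[]; nra.
- by move: lt_ca; rewrite a0 normr0 ltNge normr_ge0.
Qed.

Lemma sgz_perturb a b : exists2 e : R, 0 < e &
  forall i, sgz (a i + e * b i) = if a i == 0 then sgz (b i) else sgz (a i).
Proof.
pose d := \big[Order.min/1]_(i | a i != 0) (`|a i| / (`|b i| + 1)).
have b1_gt0 i : 0 < `|b i| + 1 by apply: ltr_pwDr.
have d_gt0 : 0 < d.
  by apply/bigmin_gtP; split=> // i ai0; rewrite divr_gt0 ?normr_gt0.
exists d => // i; case: eqP => [->|/eqP ai0].
  by rewrite add0r sgzM gtr0_sgz // mul1r.
apply: sgz_addr_small; rewrite normrM (gtr0_norm d_gt0).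
have : d <= `|a i| / (`|b i| + 1).
  exact: (bigmin_le_cond _ (fun i => `|a i| / (`|b i| + 1)) ai0).
rewrite ler_pdivlMr // => le_d.
by have := normr_ge0 (b i); nra.
Qed.

Lemma first_crossing a b X x : x \in X -> b x = 0 -> {in X, forall i, a i != 0} ->
  exists t : R, [/\ 0 < t <= 1,
    exists2 j, j \in X & (1 - t) * a j + t * b j = 0
  & {in X, forall i, (1 - t) * a i + t * b i != 0 ->
       sgz ((1 - t) * a i + t * b i) = sgz (a i)}].
Proof.
move=> xX bx0 a_nz.
pose D := [set i in X | a i * b i <= 0].
have xD : x \in D by rewrite inE xX bx0 mulr0 lexx.
have ratio i : i \in D -> 0 < a i * (a i - b i) /\ a i / (a i - b i) * (a i - b i) = a i.
  rewrite inE => /andP[iX abi].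
  have a2_gt0 := mulrr_gt0 (a_nz i iX).
  have pos : 0 < a i * (a i - b i) by nra.
  by split; rewrite // mulfVK //; apply: contraTneq pos => ->; rewrite mulr0 ltxx.
have [j jD jmin] := @arg_minP _ _ _ x (mem D) (fun i => a i / (a i - b i)) xD.
set t := a j / (a j - b j) in jmin.
have [pos_j t_j] := ratio j jD.
have /setIdP[jX abj] := jD.
have ta : t * (a j * (a j - b j)) = a j * a j by rewrite mulrCA t_j.
have aj2_gt0 := mulrr_gt0 (a_nz j jX).
have t_gt0 : 0 < t by nra.
have t_le1 : t <= 1 by nra.
exists t; split; first by rewrite t_gt0 t_le1.
  exists j => //.
  have -> : (1 - t) * a j + t * b j = a j - t * (a j - b j) by ring.
  by rewrite t_j subrr.
move=> i iX ci_nz; apply: sgz_pmulr; rewrite lt_def mulf_neq0 ?a_nz //=.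
have [iD|iND] := boolP (i \in D).
  have [pos_i q_i] := ratio i iD; have := jmin i iD.
  set q := a i / (a i - b i) in q_i * => le_tq.
  have : q * (a i * (a i - b i)) = a i * a i by rewrite mulrCA q_i.
  nra.
have ab_gt0 : 0 < a i * b i by move: iND; rewrite inE iX /= -ltNge.
have ai2_gt0 := mulrr_gt0 (a_nz i iX).
nra.
Qed.

Lemma sgz_interp_root (a b t : R) : 0 < t < 1 -> a != 0 ->
  (1 - t) * a + t * b = 0 -> sgz b = - sgz a.
Proof.
case/andP=> t_gt0 t_lt1 a_nz root_t.
have : sgz (t * b) = sgz (- ((1 - t) * a)) by congr sgz; lra.
have t1_gt0 : 0 < 1 - t by rewrite subr_gt0.
by rewrite sgzN !sgzM (gtr0_sgz t_gt0) (gtr0_sgz t1_gt0) !mul1r.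
Qed.

End SignPatterns.

Section RelativeDiscrepancy.
Variables (R : realType) (n : nat) (I : finType) (v : I -> 'rV[R]_n).
Implicit Types (f g h k phi : 'cV[R]_n) (x y : 'rV[R]_n) (A B C X : {set I}).

Lemma fappD f g x : fapp (f + g) x = fapp f x + fapp g x.
Proof. by rewrite /fapp mulmxDr mxE. Qed.

Lemma fappZ (a : R) f x : fapp (a *: f) x = a * fapp f x.
Proof. by rewrite /fapp -scalemxAr mxE. Qed.

Lemma fappN f x : fapp (- f) x = - fapp f x.
Proof. by rewrite /fapp mulmxN mxE. Qed.

Lemma fapp_eq0 f x : (fapp f x == 0) = (x *m f == 0).
Proof.
apply/eqP/eqP => [fx0|xf0]; last by rewrite /fapp xf0 mxE.
by apply/matrixP => i j; rewrite !ord1 [RHS]mxE.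
Qed.

Definition vanishes f A := {in A, forall i, fapp f (v i) = 0}.

Lemma vanishesD f g A : vanishes f A -> vanishes g A -> vanishes (f + g) A.
Proof. by move=> fA gA i iA; rewrite fappD fA ?gA ?addr0. Qed.

Lemma vanishesZ (a : R) f A : vanishes f A -> vanishes (a *: f) A.
Proof. by move=> fA i iA; rewrite fappZ fA ?mulr0. Qed.

Lemma vanishesN f A : vanishes f A -> vanishes (- f) A.
Proof. by move=> fA i iA; rewrite fappN fA ?oppr0. Qed.

Definition zset X f := [set i in X | fapp f (v i) == 0].

Lemma in_zset X f i : (i \in zset X f) = (i \in X) && (fapp f (v i) == 0).
Proof. by rewrite inE. Qed.

Lemma zset_sub X f : zset X f \subset X.
Proof. by apply/subsetP => i /setIdP[]. Qed.

Definition signsum X f : int := \sum_(i in X) sgz (fapp f (v i)).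

(* DD(B/A): functionals on E / lin A are the functionals vanishing on A. *)
Definition reldisc A B : nat :=
  \max_(k < #|I|.+1 | `[< exists f, vanishes f A /\ imbalance v (B :\: A) f = k >]) k.

Lemma sum_card_int X (P : pred I) :
  \sum_(i in X) ((P i : nat)%:Z) = #|[set i in X | P i]|%:Z.
Proof.
rewrite -sum1_card (big_morph Posz PoszD (erefl _)) big_mkcond [RHS]big_mkcond.
by apply: eq_bigr => i _; rewrite !inE; case: (i \in X); case: (P i).
Qed.

Lemma imbalance_signsum X f : imbalance v X f = `|signsum X f|%N.
Proof.
rewrite /imbalance /signsum -!sum_card_int -sumrB.
by congr absz; apply: eq_bigr => i _; case: sgzP.
Qed.

Lemma signsum_setID X Y f :
  signsum X f = signsum (X :&: Y) f + signsum (X :\: Y) f.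
Proof. exact: big_setID. Qed.

Lemma signsum_zsetD X phi f :
  signsum X f = signsum (zset X phi) f + signsum (X :\: zset X phi) f.
Proof. by rewrite (signsum_setID X (zset X phi)) (setIidPr (zset_sub _ _)). Qed.

Lemma eq_signsum X f g :
  {in X, forall i, sgz (fapp f (v i)) = sgz (fapp g (v i))} ->
  signsum X f = signsum X g.
Proof. exact: eq_bigr. Qed.

Lemma signsum_zset X f : signsum (zset X f) f = 0.
Proof. by apply: big1 => i /setIdP[_ /eqP->]; rewrite sgz0. Qed.

Lemma signsumN X f : signsum X (- f) = - signsum X f.
Proof. by rewrite /signsum -sumrN; apply: eq_bigr => i _; rewrite fappN sgzN. Qed.

Lemma imbalance_le_card X f : (imbalance v X f < #|I|.+1)%N.
Proof.
rewrite ltnS /imbalance; set p := #|_|; set q := #|_|.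
by have := max_card (mem [set i in X | 0 < fapp f (v i)]);
   have := max_card (mem [set i in X | fapp f (v i) < 0]); rewrite -/p -/q; lia.
Qed.

Lemma signsum_le_reldisc A B f :
  vanishes f A -> signsum (B :\: A) f <= (reldisc A B)%:Z.
Proof.
move=> fA; apply: le_trans (ler_norm _) _; rewrite -abszE lez_nat -imbalance_signsum.
apply: (bigop.bigmax_sup (Ordinal (imbalance_le_card _ _))) => //=.
by apply/asboolP; exists f.
Qed.

Lemma reldisc_attained A B :
  exists2 f, vanishes f A & signsum (B :\: A) f = reldisc A B.
Proof.
have P0 : `[< exists f, vanishes f A /\
    imbalance v (B :\: A) f = Ordinal (imbalance_le_card (B :\: A) 0) >].
  by apply/asboolP; exists 0; split=> // i _; rewrite /fapp mulmx0 mxE.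
rewrite /reldisc (bigop.bigmax_eq_arg _ P0).
case: arg_maxnP => // j /asboolP[f [fA <-]] _; rewrite imbalance_signsum abszE.
have [S_ge0|S_lt0] := lerP 0 (signsum (B :\: A) f).
  by exists f; rewrite ?ger0_norm.
exists (- f); first exact: vanishesN.
by rewrite signsumN ltr0_norm.
Qed.

Lemma reldiscxx A : reldisc A A = 0%N.
Proof.
have [f _] := reldisc_attained A A.
by rewrite setDv /signsum big_set0 => -[].
Qed.

Lemma sgz_fapp_perturb h k : exists2 e : R, 0 < e & forall i,
  sgz (fapp (h + e *: k) (v i)) =
    if fapp h (v i) == 0 then sgz (fapp k (v i)) else sgz (fapp h (v i)).
Proof.
have [e e_gt0 sg_e] := sgz_perturb (fun i => fapp h (v i)) (fun i => fapp k (v i)).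
by exists e => // i; rewrite fappD fappZ sg_e.
Qed.

Lemma signsum_perturb h k e X :
  (forall i, sgz (fapp (h + e *: k) (v i)) =
    if fapp h (v i) == 0 then sgz (fapp k (v i)) else sgz (fapp h (v i))) ->
  signsum X (h + e *: k) = signsum (zset X h) k + signsum (X :\: zset X h) h.
Proof.
move=> sg_e; rewrite (signsum_zsetD X h).
congr (_ + _); apply: eq_bigr => i; rewrite !inE sg_e.
  by move=> /andP[_ ->].
by case: (i \in X); rewrite ?andbF //= andbT => /negPf->.
Qed.

Lemma sub_linW A i : i \in A -> (v i <= linW v A)%MS.
Proof. by move=> iA; apply: (sumsmx_sup i) => //; rewrite genmxE. Qed.

Lemma linWS A B : A \subset B -> (linW v A <= linW v B)%MS.
Proof.
by move=> sAB; apply/sumsmx_subP => i iA; apply: sumsmx_sup (subsetP sAB i iA) _.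
Qed.

Lemma linW_min A (M : 'M[R]_n) :
  {in A, forall i, (v i <= M)%MS} -> (linW v A <= M)%MS.
Proof. by move=> AM; apply/sumsmx_subP => i iA; rewrite genmxE AM. Qed.

Lemma vanishes_linW f A x : vanishes f A -> (x <= linW v A)%MS -> fapp f x = 0.
Proof.
move=> fA xA; apply/eqP; rewrite fapp_eq0 -sub_kermx (submx_trans xA) //.
by apply: linW_min => i iA; rewrite sub_kermx -fapp_eq0 fA.
Qed.

Lemma separating_functional (M : 'M[R]_n) x : ~~ (x <= M)%MS ->
  exists2 c, (forall y, (y <= M)%MS -> fapp c y = 0) & fapp c x != 0.
Proof.
have fapp_col j y : fapp (col j (cokermx M)) y = (y *m cokermx M) 0 j.
  by rewrite /fapp colE mulmxA -colE mxE.
rewrite submxE => xK; have [j xKj] : exists j, (x *m cokermx M) 0 j != 0.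
  apply/existsP; apply: contraR xK; rewrite negb_exists => /forallP xK0.
  by apply/eqP/matrixP => i j; rewrite ord1 [RHS]mxE; apply/eqP/negPn.
exists (col j (cokermx M)) => [y|]; last by rewrite fapp_col.
by rewrite submxE fapp_col => /eqP->; rewrite mxE.
Qed.

Lemma exists_outside (M : 'M[R]_n) B :
  (\rank M < crank v B)%N -> exists2 i, i \in B & ~~ (v i <= M)%MS.
Proof.
move=> rMB; apply/exists_inP; apply: contraLR rMB => /exists_inPn BM.
by rewrite -leqNgt mxrankS // linW_min // => i /BM/negPn.
Qed.

Lemma crank_lt A C i : A \subset C -> i \in C -> ~~ (v i <= linW v A)%MS ->
  (crank v A < crank v C)%N.
Proof.
move=> sAC iC iA; have : (linW v A < linW v C)%MS; last by rewrite ltmxErank => /andP[].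
by rewrite ltmxE linWS //=; apply: contra iA => /(submx_trans (sub_linW iC)).
Qed.

Lemma lin_closed_zset B phi : lin_closed v B -> lin_closed v (zset B phi).
Proof.
move=> clB i iZ; rewrite inE clB ?(submx_trans iZ (linWS (zset_sub _ _))) //=; apply/eqP.
by apply: vanishes_linW iZ => j /setIdP[_ /eqP].
Qed.

Lemma crank_zset_lt B phi j : j \in B -> fapp phi (v j) != 0 ->
  (crank v (zset B phi) < crank v B)%N.
Proof.
move=> jB phij; apply: crank_lt (zset_sub _ _) jB _; apply: contra phij => jZ.
by apply/eqP; apply: vanishes_linW jZ => i /setIdP[_ /eqP].
Qed.

Lemma zset_setD A B phi : zset B phi :\: A = zset (B :\: A) phi.
Proof. by apply/setP => i; rewrite !inE; case: (i \in A); case: (i \in B). Qed.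

Lemma signsum_setD_split A C B f : A \subset C -> C \subset B ->
  signsum (B :\: A) f = signsum (C :\: A) f + signsum (B :\: C) f.
Proof.
move=> sAC sCB; rewrite (signsum_setID (B :\: A) C).
have -> : (B :\: A) :&: C = C :\: A.
  apply/setP => i; rewrite !inE; case iC: (i \in C); rewrite ?andbF //.
  by rewrite (subsetP sCB i iC) !andbT.
suff -> : (B :\: A) :\: C = B :\: C by [].
apply/setP => i; rewrite !inE; case iC: (i \in C) => //=.
by case iA: (i \in A); rewrite ?andbT // (subsetP sAC i iA) in iC.
Qed.

Lemma reldisc_fewer_zeros A B f : lin_closed v A -> vanishes f A ->
  signsum (B :\: A) f = reldisc A B -> zset (B :\: A) f != set0 ->
  exists f', [/\ vanishes f' A, signsum (B :\: A) f' = reldisc A B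
    & zset (B :\: A) f' \proper zset (B :\: A) f].
Proof.
set X := B :\: A => clA fA opt /set0Pn[i0 /setIdP[i0X /eqP fi0]].
have /setDP[_ /(contra (clA i0)) i0A] := i0X.
have [k kA ki0] := separating_functional i0A.
have {}kA : vanishes k A by move=> i /sub_linW; apply: kA.
have [e1 e1_gt0 sg1] := sgz_fapp_perturb f k.
have [e2 e2_gt0 sg2] := sgz_fapp_perturb f (- k).
have opt_f : signsum X f = signsum (X :\: zset X f) f.
  by rewrite (signsum_zsetD X f f) signsum_zset add0r.
have f'A e h : vanishes h A -> vanishes (f + e *: h) A.
  by move=> hA; apply: vanishesD fA (vanishesZ _ hA).
have := signsum_le_reldisc B (f'A e1 _ kA).
have := signsum_le_reldisc B (f'A e2 _ (vanishesN kA)).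
rewrite -/X (signsum_perturb _ sg1) (signsum_perturb _ sg2) signsumN -opt opt_f.
move=> le2 le1; have Zk0 : signsum (zset X f) k = 0 by lia.
exists (f + e1 *: k); split; first exact: f'A.
  by rewrite (signsum_perturb _ sg1) Zk0 add0r -opt_f.
apply/properP; split.
  apply/subsetP => i; rewrite !in_zset => /andP[->]; rewrite -sgz_eq0 sg1.
  by case: ifP => // f_nz; rewrite sgz_eq0 f_nz.
exists i0; first by rewrite in_zset i0X fi0 eqxx.
by rewrite in_zset i0X -sgz_eq0 sg1 fi0 eqxx sgz_eq0.
Qed.

Lemma reldisc_generic A B : lin_closed v A ->
  exists f, [/\ vanishes f A, {in B :\: A, forall i, fapp f (v i) != 0}
    & signsum (B :\: A) f = reldisc A B].
Proof.
move=> clA; have [f0 f0A opt0] := reldisc_attained A B.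
move: {2}#|zset (B :\: A) f0| (erefl #|zset (B :\: A) f0|) => N.
elim/ltn_ind: N f0 f0A opt0 => N IH f fA opt cardN.
have [Z0|Z_nz] := eqVneq (zset (B :\: A) f) set0.
  exists f; split=> // i iX; apply: contraT => /negPn fi0.
  by have := in_set0 i; rewrite -Z0 in_zset iX fi0.
have [f' [f'A opt' ltZ]] := reldisc_fewer_zeros clA fA opt Z_nz.
by apply: IH f'A opt' (erefl _); rewrite -cardN; apply: proper_card.
Qed.

Lemma reldisc_superadditive A C B : lin_closed v C -> A \subset C -> C \subset B ->
  (reldisc A C + reldisc C B <= reldisc A B)%N.
Proof.
move=> clC sAC sCB.
have [h [hC h_nz opt_h]] := reldisc_generic B clC.
have [g gA opt_g] := reldisc_attained A C.
have [e e_gt0 sg_e] := sgz_fapp_perturb h g.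
have hgA : vanishes (h + e *: g) A.
  by apply: vanishesD (vanishesZ _ gA) => i /(subsetP sAC); apply: hC.
have := signsum_le_reldisc B hgA.
rewrite (signsum_setD_split _ sAC sCB) -lez_nat PoszD -opt_g -opt_h.
congr (_ + _ <= _); apply: eq_signsum => i iX; rewrite sg_e.
  by case/setDP: iX => /hC->; rewrite eqxx.
by rewrite (negPf (h_nz i iX)).
Qed.

Lemma zset_sup A B phi : A \subset B -> vanishes phi A -> A \subset zset B phi.
Proof.
by move=> sAB phiA; apply/subsetP => i iA; rewrite in_zset (subsetP sAB i iA) phiA ?eqxx.
Qed.

Definition sign_le X phi f :=
  {in X, forall i, fapp phi (v i) != 0 -> sgz (fapp phi (v i)) = sgz (fapp f (v i))}.

Lemma signsum_sign_le X (Y : {set I}) phi f :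
  sign_le X phi f -> Y \subset X :\: zset X phi ->
  signsum Y phi = signsum Y f.
Proof.
move=> le_phi sYX; apply: eq_signsum => i /(subsetP sYX)/setDP[iX].
by rewrite in_zset iX => /le_phi->.
Qed.

Lemma reldisc_split_zset A B phi f : lin_closed v B -> A \subset B ->
  vanishes phi A -> vanishes f A -> signsum (B :\: A) f = reldisc A B ->
  sign_le (B :\: A) phi f ->
  reldisc A B = (reldisc A (zset B phi) + reldisc (zset B phi) B)%N.
Proof.
move=> clB sAB phiA fA opt le_phi; set C := zset B phi.
have sAC : A \subset C := zset_sup sAB phiA.
have sCB : C \subset B := zset_sub B phi.
have clC : lin_closed v C := lin_closed_zset (phi := phi) clB.
apply/eqP; rewrite eqn_leq (reldisc_superadditive clC) // andbT.
rewrite -lez_nat PoszD -opt (signsum_setD_split _ sAC sCB) lerD //.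
  exact: signsum_le_reldisc.
have phiC : vanishes phi C by move=> i /setIdP[_ /eqP].
rewrite -(eq_signsum (f := phi)) ?signsum_le_reldisc // => i /setDP[iB iC].
have phi_nz : fapp phi (v i) != 0 by apply: contra iC => phi0; rewrite in_zset iB.
have iA : i \notin A by apply: contra iC => /(subsetP sAC).
by rewrite le_phi // inE iA.
Qed.

Section Crossing.
Variables (A B : {set I}) (g : 'cV[R]_n) (x y : I).
Let X := B :\: A.
Hypotheses (gA : vanishes g A) (g_subopt : signsum X g < (reldisc A B)%:Z).
Hypotheses (xX : x \in X) (gx0 : fapp g (v x) = 0).
Hypotheses (yX : y \in X) (gy_nz : fapp g (v y) != 0).

Let generic_opt f := [/\ vanishes f A, {in X, forall i, fapp f (v i) != 0}
  & signsum X f = reldisc A B].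

Let mismatch f := [set i in X | sgz (fapp f (v i)) != sgz (fapp g (v i))].

Definition crossing phi f := [/\ vanishes phi A,
  exists2 j, j \in X & fapp phi (v j) != 0,
  sign_le X phi f & 1 <= signsum (zset X phi) f].

(* Flipping the signs of f on a zero set where f counts nonpositively keeps f
   optimal, and fixes the sign mismatches with g there. *)
Lemma flip_zset f phi : generic_opt f -> vanishes phi A -> sign_le X phi f ->
  signsum (zset X phi) f <= 0 ->
  {in zset X phi, forall i, sgz (fapp g (v i)) = - sgz (fapp f (v i))} ->
  zset X phi != set0 ->
  exists2 f', generic_opt f' & mismatch f' \proper mismatch f.
Proof.
case=> fA f_nz opt phiA le_phi Z_le0 g_opp /set0Pn[j jZ].
have [e e_gt0 sg_e] := sgz_fapp_perturb phi (- f).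
have flip i : i \in X -> sgz (fapp (phi + e *: - f) (v i)) =
    if fapp phi (v i) == 0 then - sgz (fapp f (v i)) else sgz (fapp f (v i)).
  by move=> iX; rewrite sg_e fappN sgzN; case: ifP => // /negbT; apply: le_phi.
have sgz_neqN i : i \in X -> - sgz (fapp f (v i)) != sgz (fapp f (v i)).
  by move=> /f_nz; rewrite eqNr sgz_eq0.
have f'A : vanishes (phi + e *: - f) A.
  exact: vanishesD phiA (vanishesZ _ (vanishesN fA)).
exists (phi + e *: - f).
  split=> //; first by move=> i iX; rewrite -sgz_eq0 flip //; case: ifP;
    rewrite ?oppr_eq0 sgz_eq0 f_nz.
  apply/eqP; rewrite eq_le signsum_le_reldisc // andTb.
  rewrite (signsum_perturb _ sg_e) signsumN -opt (signsum_zsetD X phi f).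
  rewrite (signsum_sign_le le_phi (subxx _)) lerD2r.
  by rewrite (le_trans Z_le0) // oppr_ge0.
have /setIdP[jX /eqP phij] := jZ.
apply/properP; split.
  apply/subsetP => i /setIdP[iX]; rewrite inE iX flip //=.
  case: ifP => [phi0|_ //]; apply: contra => _.
  by rewrite g_opp // in_zset iX phi0.
exists j; first by rewrite inE jX /= g_opp // eq_sym sgz_neqN.
by rewrite inE jX /= flip // phij eqxx g_opp // eqxx.
Qed.

Lemma crossing_step f : generic_opt f ->
  (exists phi, crossing phi f) \/
  exists2 f', generic_opt f' & mismatch f' \proper mismatch f.
Proof.
move=> opt_f; have [fA f_nz opt] := opt_f.
have [t [/andP[t_gt0 t_le1] [j jX phij] agree]] :=
  first_crossing (a := fun i => fapp f (v i)) (b := fun i => fapp g (v i)) xX gx0 f_nz.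
pose phi := (1 - t) *: f + t *: g.
have fapp_phi i : fapp phi (v i) = (1 - t) * fapp f (v i) + t * fapp g (v i).
  by rewrite fappD !fappZ.
have phiA : vanishes phi A := vanishesD (vanishesZ _ fA) (vanishesZ _ gA).
have le_phi : sign_le X phi f by move=> i iX; rewrite fapp_phi; apply: agree.
have [S_ge1|S_lt1] := lerP 1 (signsum (zset X phi) f).
  left; exists phi; split=> //.
  have [t1|t_lt1] := eqVneq t 1.
    by exists y; rewrite // fapp_phi t1 subrr mul0r mul1r add0r.
  exists x; rewrite // fapp_phi gx0 mulr0 addr0 mulf_neq0 ?f_nz //.
  by rewrite subr_eq0 eq_sym.
right; have t_lt1 : t < 1.
  rewrite lt_neqAle t_le1 andbT; apply: contraTneq g_subopt => t1.
  have -> : g = phi by rewrite /phi t1 subrr scale0r add0r scale1r.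
  rewrite -leNgt -opt (signsum_zsetD X phi f) (signsum_zsetD X phi phi).
  rewrite signsum_zset (signsum_sign_le le_phi (subxx _)).
  by rewrite lerD2r -ltzD1.
have Z_le0 : signsum (zset X phi) f <= 0 by rewrite -ltzD1.
apply: (flip_zset opt_f phiA le_phi Z_le0).
  move=> i; rewrite in_zset fapp_phi => /andP[iX /eqP].
  by apply: sgz_interp_root; rewrite ?t_gt0 ?f_nz.
by apply/set0Pn; exists j; rewrite in_zset jX fapp_phi phij eqxx.
Qed.

Lemma crossing_exists f : generic_opt f ->
  exists phi f', [/\ vanishes f' A, signsum X f' = reldisc A B & crossing phi f'].
Proof.
move: {2}#|mismatch f| (erefl #|mismatch f|) => N.
elim/ltn_ind: N f => N IH f cardN opt_f.
have [[phi cross]|[f' opt_f' lt_f']] := crossing_step opt_f.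
  by case: opt_f => fA _ opt; exists phi, f.
by apply: (IH _ _ f' (erefl _) opt_f'); rewrite -cardN; apply: proper_card.
Qed.

End Crossing.

Definition good_split A C B m := [/\ lin_closed v C, A \subset C, C \subset B,
  reldisc A B = (reldisc A C + reldisc C B)%N
  & (minn (reldisc A B) m <= reldisc A C)%N].

Lemma good_split_zset A B phi f m : lin_closed v A -> lin_closed v B -> A \subset B ->
  vanishes phi A -> vanishes f A -> signsum (B :\: A) f = reldisc A B ->
  sign_le (B :\: A) phi f -> (exists2 j, j \in B & fapp phi (v j) != 0) ->
  (exists i, i \in zset (B :\: A) phi) ->
  (minn (reldisc A B) m <= reldisc A (zset B phi))%N ->
  (crank v A < crank v (zset B phi) < crank v B)%N /\ good_split A (zset B phi) B m.
Proof.
move=> clA clB sAB phiA fA opt le_phi [j jB phij] [i].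
rewrite -zset_setD => /setDP[iZ iA].
have sAZ := zset_sup sAB phiA.
split.
  by rewrite (crank_zset_lt jB phij) (crank_lt sAZ iZ) //; apply: contra iA; apply: clA.
split=> //; [exact: lin_closed_zset | exact: zset_sub |].
exact: reldisc_split_zset clB sAB phiA fA opt le_phi.
Qed.

Lemma codim2_functional A B : ((crank v A).+2 <= crank v B)%N ->
  exists (x y : I) g, [/\ x \in B :\: A, y \in B :\: A, fapp g (v x) = 0,
    fapp g (v y) != 0 & vanishes g A /\ signsum (B :\: A) g <= 0].
Proof.
move=> rAB; have [x xB xA] : exists2 x, x \in B & ~~ (v x <= linW v A)%MS.
  by apply: exists_outside; rewrite -/(crank v A); lia.
pose M := (linW v A + <<v x>>)%MS.
have [y yB yM] : exists2 y, y \in B & ~~ (v y <= M)%MS.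
  apply: exists_outside; have [le_M _] := mxrank_adds_leqif (linW v A) <<v x>>%MS.
  have := rank_leq_row (v x); rewrite -mxrank_gen /M /crank in rAB *; lia.
have AM : (linW v A <= M)%MS := addsmxSl _ _.
have [c cM cy] := separating_functional yM.
have cA : vanishes c A by move=> i /sub_linW iA; apply/cM/(submx_trans iA AM).
have cx : fapp c (v x) = 0 by apply: cM; rewrite (submx_trans _ (addsmxSr _ _)) ?genmxE.
have xX : x \in B :\: A by rewrite inE xB andbT; apply: contra xA; apply: sub_linW.
have yX : y \in B :\: A.
  by rewrite inE yB andbT; apply: contra yM => /sub_linW/submx_trans; apply.
exists x, y; have [c_le0|c_gt0] := lerP (signsum (B :\: A) c) 0; first by exists c.
exists (- c); rewrite !fappN cx oppr0 oppr_eq0 signsumN oppr_le0 ltW //.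
by split=> //; split=> //; apply: vanishesN.
Qed.

Lemma reldisc_split_between A B : lin_closed v A -> lin_closed v B -> A \subset B ->
  ((crank v A).+2 <= crank v B)%N ->
  exists C, (crank v A < crank v C < crank v B)%N /\ good_split A C B 1.
Proof.
move=> clA clB sAB rAB.
have [x [y [g [xX yX gx0 gy_nz [gA g_le0]]]]] := codim2_functional rAB.
set X := B :\: A in xX yX g_le0 *.
have [D0|D_gt0] := posnP (reldisc A B).
  have opt_g : signsum X g = reldisc A B.
    have := signsum_le_reldisc B (vanishesN gA); rewrite signsumN D0 -/X.
    by move: g_le0; lia.
  exists (zset B g); apply: good_split_zset opt_g _ _ _ _ => //.
  - by exists y => //; case/setDP: yX.
  - by exists x; rewrite in_zset xX gx0 eqxx.
  - by rewrite D0.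
have g_subopt : signsum X g < (reldisc A B)%:Z.
  by apply: le_lt_trans g_le0 _; rewrite ltz_nat.
have [f [fA f_nz opt]] := reldisc_generic B clA.
have [phi [f' [f'A opt' [phiA [j jX phij] le_phi S_ge1]]]] :=
  crossing_exists gA g_subopt xX gx0 yX gy_nz (And3 fA f_nz opt).
exists (zset B phi); apply: good_split_zset opt' le_phi _ _ _ => //.
- by exists j => //; case/setDP: jX.
- apply/set0Pn; apply: contraTneq S_ge1 => ->.
  by rewrite /signsum big_set0.
- have := signsum_le_reldisc (zset B phi) f'A; rewrite zset_setD -lez_nat.
  by move: S_ge1 D_gt0; rewrite -/X; lia.
Qed.

Lemma good_split_trans_l A C0 C B m :
  good_split A C0 B m -> good_split A C C0 m -> good_split A C B m.
Proof.
case=> clC0 sAC0 sC0B eq0 min0 [clC sAC sCC0 eq1 min1].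
have := reldisc_superadditive clC0 sCC0 sC0B.
have := reldisc_superadditive clC sAC (subset_trans sCC0 sC0B).
by split=> //; [exact: subset_trans sC0B | lia | lia].
Qed.

Lemma good_split_trans_r A C1 C B s :
  good_split A C1 B 1 -> good_split C1 C B s -> good_split A C B s.+1.
Proof.
case=> clC1 sAC1 sC1B eq0 min0 [clC sC1C sCB eq1 min1].
have := reldisc_superadditive clC1 sAC1 sC1C.
have := reldisc_superadditive clC (subset_trans sAC1 sC1C) sCB.
by split=> //; [exact: subset_trans sC1C | lia | lia].
Qed.

Lemma good_split_succ A B : lin_closed v A -> lin_closed v B -> A \subset B ->
  (crank v A < crank v B)%N ->
  exists C, crank v C = (crank v A).+1 /\ good_split A C B 1.
Proof.
move=> clA; move: {2}(crank v B) (erefl (crank v B)) => N.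
elim/ltn_ind: N B => N IH B rB clB sAB rAB.
have [rAB2|rAB1] := leqP (crank v A).+2 (crank v B).
  have [C0 [/andP[rAC0 rC0B] split0]] := reldisc_split_between clA clB sAB rAB2.
  have [clC0 sAC0 _ _ _] := split0.
  have [C [rC split1]] := IH _ (leq_trans rC0B (eq_leq rB)) C0 (erefl _) clC0 sAC0 rAC0.
  by exists C; split=> //; apply: good_split_trans_l split0 split1.
exists B; split; first by lia.
by split=> //; rewrite ?reldiscxx ?addn0 ?geq_minl.
Qed.

Lemma good_split_rank A B s : lin_closed v A -> lin_closed v B -> A \subset B ->
  (crank v A + s <= crank v B)%N ->
  exists C, crank v C = (crank v A + s)%N /\ good_split A C B s.
Proof.
elim: s A => [|s IH] A clA clB sAB rAB.
  by exists A; rewrite addn0; split=> //; split; rewrite ?reldiscxx ?minn0.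
have [|C1 [rC1 split1]] := good_split_succ clA clB sAB; first by lia.
have [clC1 _ sC1B _ _] := split1.
have [|C [rC split2]] := IH C1 clC1 clB sC1B; first by rewrite rC1; lia.
by exists C; split; [rewrite rC rC1; lia | apply: good_split_trans_r split1 split2].
Qed.

(* The smallest flat lin(empty) cap V, made of the zero vectors. *)
Definition loops := [set i | v i == 0].

Lemma linW_loops : linW v loops = 0.
Proof.
by apply/eqP; rewrite -submx0; apply: linW_min => i; rewrite inE => /eqP->; apply: sub0mx.
Qed.

Lemma lin_closed_loops : lin_closed v loops.
Proof. by move=> i; rewrite linW_loops submx0 inE. Qed.

Lemma crank_loops : crank v loops = 0%N.
Proof. by rewrite /crank linW_loops mxrank0. Qed.

Lemma vanishes_loops f : vanishes f loops.
Proof. by move=> i /[!inE] /eqP->; rewrite /fapp mul0mx mxE. Qed.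

Lemma DD_reldisc X : DD v X = reldisc loops X.
Proof.
have drop_loops f : imbalance v (X :\: loops) f = imbalance v X f.
  rewrite !imbalance_signsum (signsum_setID X loops); congr absz.
  rewrite [signsum (_ :&: _) f]big1 ?add0r // => i /setIP[_ /vanishes_loops->].
  by rewrite sgz0.
apply: eq_bigl => k; apply/asboolP/asboolP => -[f].
  by exists f; rewrite drop_loops; split=> //; apply: vanishes_loops.
by case=> _ <-; exists f; rewrite drop_loops.
Qed.

Lemma DDquot_reldisc W : DDquot v W = reldisc W [set: I].
Proof. by rewrite /reldisc setTD. Qed.

End RelativeDiscrepancy.

Theorem mainTheorem17 (R : realType) (n : nat) (I : finType)
    (v : I -> 'rV[R]_n) (s : nat) :
  (1 <= s <= crank v [set: I] - 1)%N ->
  exists W : {set I},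
    [/\ crank v W = s,
        DD v [set: I] = (DD v W + DDquot v W)%N,
        (minn (DD v [set: I]) s <= DD v W)%N
      & lin_closed v W].
Proof.
case/andP=> s_gt0 s_lt_rank.
have clT : lin_closed v [set: I] by move=> i _; apply: in_setT.
have [|W [rW [clW _ _ splitW minW]]] :=
  good_split_rank (s := s) (@lin_closed_loops _ _ _ v) clT (subsetT _).
  by rewrite crank_loops; lia.
exists W; rewrite !DD_reldisc DDquot_reldisc.
by split; rewrite // rW crank_loops.
Qed.
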